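(* Let $\mathcal A,\mathcal B$ be categories with equalizers and $(\mathcal T,(N_A,R_A),(N_B,R_B),\tau)$ a pre-torsor such that $\eta^A,\eta^B$ are regular natural monomorphisms and $N_A,N_B$ preserve equalizers. Then: (1) Let $(D,j)$ be the equalizer of $\theta^l:=(R_B\epsilon^AN_BR_BN_AR_AN_B)\circ(R_BN_A\tau)$ and $\theta^r:=\eta^BR_BN_AR_AN_B$ (both $R_BN_AR_AN_B\to R_BN_BR_BN_AR_AN_B$). There are unique $\Delta^D,\varepsilon^D$ with $(R_BN_AR_AN_Bj)\circ(jD)\circ\Delta^D=(R_BN_A\tau)\circ j$ and $\eta^B\circ\varepsilon^D=(R_B\epsilon^AN_B)\circ j$, making $\mathbb D=(D,\Delta^D,\varepsilon^D)$ a comonad on $\mathcal B$ whose functor $D$ preserves equalizers. (2) There is a natural transformation $\zeta:DR_B\to R_BN_AR_A$ such that $(\mathcal T,(N_B,R_B),(N_A,R_A),\mathbb D,\zeta)$ is an object of $\overline{\mathrm{RArr}}(\mathcal B,\mathcal A)$, i.e. $(R_B,\zeta)$ is a co-regular comonad arrow from $\mathbb D$ to the comonad $N_AR_A$. (3) For a morphism $F$ between two pre-torsors both satisfying the hypotheses, there is a unique comonad morphism $t:\mathbb D\to\mathbb D'$ between the comonads of (1) such that $(F,t)$ is a morphism in $\overline{\mathrm{RArr}}(\mathcal B,\mathcal A)$ between the objects of (2).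
   Context: Conventions: $\circ$ vertical composition, juxtaposition horizontal composition; a functor's name denotes its identity transformation. Units/counits $\eta^A,\epsilon^A,\eta^B,\epsilon^B$; $N_AR_A$ is a comonad on $\mathcal T$ with comultiplication $N_A\eta^AR_A$ and counit $\epsilon^A$. A regular natural monomorphism is the equalizer in the functor category of some pair of natural transformations. Pre-torsor: adjunctions $(N_A:\mathcal A\to\mathcal T,R_A)$, $(N_B:\mathcal B\to\mathcal T,R_B)$ and $\tau:R_AN_B\to R_AN_BR_BN_AR_AN_B$ with $(R_AN_BR_B\epsilon^AN_B)\circ\tau=R_AN_B\eta^B$, $(R_A\epsilon^BN_AR_AN_B)\circ\tau=\eta^AR_AN_B$, $(R_AN_BR_BN_A\tau)\circ\tau=(\tau R_BN_AR_AN_B)\circ\tau$. Morphisms of pre-torsors: functors $F:\mathcal T'\to\mathcal T$ with $R_AF=R'_A$, $R_BF=R'_B$, $(R_AbR_BaR_Ab)\circ\tau=\tau'\circ(R_Ab)$ where $a=(\epsilon^AFN'_A)\circ(N_A\eta'^A)$, $b=(\epsilon^BFN'_B)\circ(N_B\eta'^B)$. Comonad arrow from $\mathbb D$ (on $\mathcal B$) to $\mathbb C'=(C',\Delta',\varepsilon')$ (on $\mathcal T$): $(F:\mathcal T\to\mathcal B,\ \zeta:DF\to FC')$ with $(F\varepsilon')\circ\zeta=\varepsilon^DF$ and $(F\Delta')\circ\zeta=(\zeta C')\circ(D\zeta)\circ(\Delta^DF)$. For $F=R_B$ with left adjoint $N_B$, it is co-regular if $\bar\zeta:=(\epsilon^BN_AR_AN_B)\circ(N_B\zeta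 N_B)\circ(N_BD\eta^B):N_BD\to N_AR_AN_B$ is an isomorphism. $\overline{\mathrm{RArr}}(\mathcal B,\mathcal A)$ has objects $(\mathcal T,(N_B,R_B),(N_A,R_A),\mathbb D,\zeta)$ with $(R_B,\zeta)$ a co-regular comonad arrow from a comonad $\mathbb D$ on $\mathcal B$ to $N_AR_A$, and morphisms $(F,t)$ with $F:\mathcal T'\to\mathcal T$, $R_AF=R'_A$, $R_BF=R'_B$, and $t:\mathbb D\to\mathbb D'$ a comonad morphism with $(R_BaR'_A)\circ(\zeta F)=\zeta'\circ(tR'_B)$. *)

Unset Implicit Arguments.
Unset Strict Implicit.

Record Category := {
  Ob :> Type;
  Hom : Ob -> Ob -> Type;
  idm : forall a, Hom a a;
  cmp : forall {a b c}, Hom b c -> Hom a b -> Hom a c;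
  cmp_idl : forall a b (f : Hom a b), cmp (idm b) f = f;
  cmp_idr : forall a b (f : Hom a b), cmp f (idm a) = f;
  cmp_assoc : forall a b c d (h : Hom c d) (g : Hom b c) (f : Hom a b),
      cmp h (cmp g f) = cmp (cmp h g) f }.
Arguments Hom {_} _ _.
Arguments idm {_} _.
Arguments cmp {_ _ _ _} _ _.
Arguments cmp_assoc {_ _ _ _ _} _ _ _.

Notation "g ∘ f" := (cmp g f) (at level 40, left associativity).

Record Functor (C D : Category) := {
  fobj :> Ob C -> Ob D;
  fmap : forall {a b}, Hom a b -> Hom (fobj a) (fobj b);
  fmap_id : forall a, fmap (idm a) = idm (fobj a);
  fmap_cmp : forall a b c (g : Hom b c) (f : Hom a b),
      fmap (g ∘ f) = fmap g ∘ fmap f }.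
Arguments fmap {C D} _ {a b} _.

Definition Fid (C : Category) : Functor C C.
Proof.
  refine {| fobj := fun a => a; fmap := fun a b f => f |}; reflexivity.
Defined.

Definition Fcomp {C D E : Category} (G : Functor D E) (F : Functor C D) : Functor C E.
Proof.
  refine {| fobj := fun a => G (F a); fmap := fun a b f => fmap G (fmap F f) |}.
  - intros; rewrite !fmap_id; reflexivity.
  - intros; rewrite !fmap_cmp; reflexivity.
Defined.

(* A transformation is typed by the object maps only, so that composites of
   functors are definitionally associative in its type. Naturality is a
   separate predicate. *)
Definition Trans {C D : Category} (F G : Ob C -> Ob D) := forall a, Hom (F a) (G a).

Definition natural {C D : Category} (F G : Functor C D) (al : Trans F G) : Prop :=
  forall a b (f : Hom a b), fmap G f ∘ al a = al b ∘ fmap F f.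

Definition teq {C D : Category} {F G : Ob C -> Ob D} (al be : Trans F G) : Prop :=
  forall a, al a = be a.

Definition idT {C D : Category} (F : Ob C -> Ob D) : Trans F F := fun a => idm (F a).

Definition vcomp {C D : Category} {F G H : Ob C -> Ob D}
  (be : Trans G H) (al : Trans F G) : Trans F H := fun a => be a ∘ al a.

Definition lwhisk {C D E : Category} {F G : Ob C -> Ob D} (H : Functor D E)
  (al : Trans F G) : Trans (fun a => H (F a)) (fun a => H (G a)) :=
  fun a => fmap H (al a).

Definition rwhisk {C' C D : Category} {F G : Ob C -> Ob D} (al : Trans F G)
  (K : Ob C' -> Ob C) : Trans (fun a => F (K a)) (fun a => G (K a)) :=
  fun a => al (K a).

Definition hcomp {C D E : Category} {F F' : Ob C -> Ob D} (G : Functor D E)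
  {G' : Ob D -> Ob E} (be : Trans G G') (al : Trans F F')
  : Trans (fun a => G (F a)) (fun a => G' (F' a)) :=
  fun a => be (F' a) ∘ fmap G (al a).

Definition is_iso {C : Category} {a b : C} (f : Hom a b) : Prop :=
  exists g : Hom b a, g ∘ f = idm a /\ f ∘ g = idm b.

Record Adjunction {C D : Category} (N : Functor C D) (R : Functor D C) := {
  unit : Trans (fun a : Ob C => a) (fun a => R (N a));
  counit : Trans (fun x : Ob D => N (R x)) (fun x => x);
  unit_nat : natural (Fid C) (Fcomp R N) unit;
  counit_nat : natural (Fcomp N R) (Fid D) counit;
  adj_tri1 : forall a, counit (N a) ∘ fmap N (unit a) = idm (N a);
  adj_tri2 : forall x, fmap R (counit x) ∘ unit (R x) = idm (R x) }.
Arguments unit {C D N R} _ _.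
Arguments counit {C D N R} _ _.

Definition is_equalizer {C : Category} {a b e : C} (f g : Hom a b) (m : Hom e a) : Prop :=
  f ∘ m = g ∘ m /\
  forall z (h : Hom z a), f ∘ h = g ∘ h ->
    exists u : Hom z e, m ∘ u = h /\ forall u' : Hom z e, m ∘ u' = h -> u' = u.

Definition has_equalizers (C : Category) : Prop :=
  forall (a b : C) (f g : Hom a b), exists (e : C) (m : Hom e a), is_equalizer f g m.

Definition preserves_equalizers {C D : Category} (F : Functor C D) : Prop :=
  forall (a b e : C) (f g : Hom a b) (m : Hom e a),
    is_equalizer f g m -> is_equalizer (fmap F f) (fmap F g) (fmap F m).

Definition is_nat_equalizer {C D : Category} (E X Y : Functor C D)
  (s1 s2 : Trans X Y) (m : Trans E X) : Prop :=
  natural E X m /\ teq (vcomp s1 m) (vcomp s2 m) /\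
  forall (Z : Functor C D) (h : Trans Z X), natural Z X h ->
    teq (vcomp s1 h) (vcomp s2 h) ->
    exists u : Trans Z E, natural Z E u /\ teq (vcomp m u) h /\
      forall u' : Trans Z E, natural Z E u' -> teq (vcomp m u') h -> teq u' u.

Definition regular_nat_mono {C D : Category} (E X : Functor C D) (m : Trans E X) : Prop :=
  exists (Y : Functor C D) (s1 s2 : Trans X Y),
    natural X Y s1 /\ natural X Y s2 /\ is_nat_equalizer E X Y s1 s2 m.

Definition is_comonad {C : Category} (D : Functor C C)
  (De : Trans D (fun a => D (D a))) (ep : Trans D (fun a => a)) : Prop :=
  natural D (Fcomp D D) De /\ natural D (Fid C) ep /\
  teq (vcomp (lwhisk D ep) De) (idT D) /\
  teq (vcomp (rwhisk ep D) De) (idT D) /\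
  teq (vcomp (lwhisk D De) De) (vcomp (rwhisk De D) De).

Definition comonad_morphism {C : Category} (D D' : Functor C C)
  (De : Trans D (fun a => D (D a))) (ep : Trans D (fun a => a))
  (De' : Trans D' (fun a => D' (D' a))) (ep' : Trans D' (fun a => a))
  (t : Trans D D') : Prop :=
  natural D D' t /\
  teq (vcomp De' t) (vcomp (hcomp D t t) De) /\
  teq (vcomp ep' t) ep.

Definition comonad_arrow {B T : Category} (D : Functor B B)
  (De : Trans D (fun a => D (D a))) (ep : Trans D (fun a => a))
  (F : Functor T B) (C' : Functor T T)
  (De' : Trans C' (fun x => C' (C' x))) (ep' : Trans C' (fun x => x))
  (ze : Trans (fun x => D (F x)) (fun x => F (C' x))) : Prop :=
  natural (Fcomp D F) (Fcomp F C') ze /\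
  teq (vcomp (lwhisk F ep') ze) (rwhisk ep F) /\
  teq (vcomp (lwhisk F De') ze)
      (vcomp (rwhisk ze C') (vcomp (lwhisk D ze) (rwhisk De F))).

Section Paper.
Context {A B T : Category} (NA : Functor A T) (RA : Functor T A)
        (NB : Functor B T) (RB : Functor T B)
        (adjA : Adjunction NA RA) (adjB : Adjunction NB RB).

Definition tauType :=
  Trans (fun b => RA (NB b)) (fun b => RA (NB (RB (NA (RA (NB b)))))).

Definition is_pretorsor (tau : tauType) : Prop :=
  natural (Fcomp RA NB) (Fcomp RA (Fcomp NB (Fcomp RB (Fcomp NA (Fcomp RA NB))))) tau /\
  teq (vcomp (lwhisk (Fcomp RA (Fcomp NB RB)) (rwhisk (counit adjA) NB)) tau)
      (lwhisk (Fcomp RA NB) (unit adjB)) /\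
  teq (vcomp (lwhisk RA (rwhisk (counit adjB) (fun b => NA (RA (NB b))))) tau)
      (rwhisk (unit adjA) (fun b => RA (NB b))) /\
  teq (vcomp (lwhisk (Fcomp RA (Fcomp NB (Fcomp RB NA))) tau) tau)
      (vcomp (rwhisk tau (fun b => RB (NA (RA (NB b))))) tau).

Definition torsor_hyps (tau : tauType) : Prop :=
  is_pretorsor tau /\
  regular_nat_mono (Fid A) (Fcomp RA NA) (unit adjA) /\
  regular_nat_mono (Fid B) (Fcomp RB NB) (unit adjB) /\
  preserves_equalizers NA /\ preserves_equalizers NB.

Definition RNRN : Functor B B := Fcomp RB (Fcomp NA (Fcomp RA NB)).
Definition RNRNRN : Functor B B :=
  Fcomp RB (Fcomp NB (Fcomp RB (Fcomp NA (Fcomp RA NB)))).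

Definition theta_l (tau : tauType) : Trans RNRN RNRNRN :=
  vcomp (lwhisk RB (rwhisk (counit adjA) (fun b => NB (RB (NA (RA (NB b)))))))
        (lwhisk RB (lwhisk NA tau)).

Definition theta_r : Trans RNRN RNRNRN :=
  rwhisk (unit adjB) (fun b => RB (NA (RA (NB b)))).

Definition Delta_eq (tau : tauType) (D : Functor B B)
  (j : Trans D (fun b => RB (NA (RA (NB b)))))
  (De : Trans D (fun b => D (D b))) : Prop :=
  teq (vcomp (lwhisk RNRN j) (vcomp (rwhisk j D) De))
      (vcomp (lwhisk RB (lwhisk NA tau)) j).

Definition eps_eq (D : Functor B B)
  (j : Trans D (fun b => RB (NA (RA (NB b)))))
  (ep : Trans D (fun b => b)) : Prop :=
  teq (vcomp (unit adjB) ep) (vcomp (lwhisk RB (rwhisk (counit adjA) NB)) j).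

Definition NR_Delta : Trans (fun x => NA (RA x)) (fun x => NA (RA (NA (RA x)))) :=
  lwhisk NA (rwhisk (unit adjA) RA).

Definition zeta_can (D : Functor B B) (j : Trans D (fun b => RB (NA (RA (NB b)))))
  : Trans (fun x => D (RB x)) (fun x => RB (NA (RA x))) :=
  vcomp (lwhisk (Fcomp RB (Fcomp NA RA)) (counit adjB)) (rwhisk j RB).

Definition zeta_bar (D : Functor B B)
  (ze : Trans (fun x => D (RB x)) (fun x => RB (NA (RA x))))
  : Trans (fun b => NB (D b)) (fun b => NA (RA (NB b))) :=
  vcomp (rwhisk (counit adjB) (fun b => NA (RA (NB b))))
        (vcomp (lwhisk NB (rwhisk ze NB)) (lwhisk NB (lwhisk D (unit adjB)))).

(* (R_B, ze) is a co-regular comonad arrow from (D,De,ep) to N_A R_A;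
   i.e. (T,(N_B,R_B),(N_A,R_A),D,ze) is an object of RArr-bar(B,A) *)
Definition coregular_comonad_arrow (D : Functor B B)
  (De : Trans D (fun b => D (D b))) (ep : Trans D (fun b => b))
  (ze : Trans (fun x => D (RB x)) (fun x => RB (NA (RA x)))) : Prop :=
  is_comonad D De ep /\
  comonad_arrow D De ep RB (Fcomp NA RA) NR_Delta (counit adjA) ze /\
  (forall b, is_iso (zeta_bar D ze b)).

End Paper.

(* The second pre-torsor lives on T' and its right adjoints are R_A F and R_B F
   (the strict equalities R_A F = R'_A, R_B F = R'_B are built in). *)
Section Morphisms.
Context {A B T T' : Category} (F : Functor T' T)
        (NA : Functor A T) (RA : Functor T A) (NB : Functor B T) (RB : Functor T B)
        (adjA : Adjunction NA RA) (adjB : Adjunction NB RB)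
        (NA' : Functor A T') (NB' : Functor B T')
        (adjA' : Adjunction NA' (Fcomp RA F)) (adjB' : Adjunction NB' (Fcomp RB F)).

Definition mor_a : Trans NA (fun x => F (NA' x)) :=
  vcomp (rwhisk (counit adjA) (fun x => F (NA' x))) (lwhisk NA (unit adjA')).

Definition mor_b : Trans NB (fun x => F (NB' x)) :=
  vcomp (rwhisk (counit adjB) (fun x => F (NB' x))) (lwhisk NB (unit adjB')).

Definition pretorsor_morphism (tau : tauType NA RA NB RB)
  (tau' : tauType NA' (Fcomp RA F) NB' (Fcomp RB F)) : Prop :=
  teq (vcomp (lwhisk RA (hcomp NB mor_b (lwhisk RB (hcomp NA mor_a (lwhisk RA mor_b))))) tau)
      (vcomp tau' (lwhisk RA mor_b)).

Definition rarr_compat (D D' : Functor B B)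
  (ze : Trans (fun x => D (RB x)) (fun x => RB (NA (RA x))))
  (ze' : Trans (fun y => D' (RB (F y))) (fun y => RB (F (NA' (RA (F y))))))
  (t : Trans D D') : Prop :=
  teq (vcomp (lwhisk RB (rwhisk mor_a (fun y => RA (F y)))) (rwhisk ze F))
      (vcomp ze' (rwhisk t (fun y => RB (F y)))).

End Morphisms.

From Stdlib Require Import Setoid IndefiniteDescription.

(* D is carved out of R_B N_A R_A N_B by an equalizer, and the hypotheses make
   every functor built from N_A, N_B, R_A, R_B preserve equalizers (right
   adjoints always do).  Hence j, its images under these functors and the unit
   eta^B are monomorphisms and equalizers: Delta^D and eps^D are obtained by
   factoring R_B N_A tau . j and R_B eps^A N_B . j through them, and every
   identity between the resulting maps is checked after composing with such a
   monomorphism, where it reduces to the pre-torsor axioms.  Co-regularity: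
   zeta-bar is eps^B N_A R_A N_B . N_B j, whose inverse is the factorization of
   eps^A N_B R_B N_A R_A N_B . N_A tau through N_B j, the equalizer of
   N_B theta^l and N_B theta^r.  For a morphism F of pre-torsors, the comparison
   t : D -> D' is the factorization of R_B (a R'_A N'_B . N_A R_A b) . j
   through j', and the compatibility with zeta, zeta' pins down j' . t, hence t. *)

Ltac norm :=
  cbn [Fcomp Fid fobj fmap];
  rewrite ?fmap_cmp, ?fmap_id, ?cmp_assoc, ?cmp_idl, ?cmp_idr.
Ltac norm_in H :=
  cbn [Fcomp Fid fobj fmap] in H;
  rewrite ?fmap_cmp, ?fmap_id, ?cmp_assoc, ?cmp_idl, ?cmp_idr in H.

(* [rw H] rewrites with the normalized equation [H : L = R] inside a
   left-associated composite: when [L] is itself a composite it need not be a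
   subterm of [... ∘ L ∘ ...], so we rewrite with [X ∘ L = X ∘ R] instead. *)
Ltac rw_assoc H :=
  first [ rewrite H
        | let T := type of H in
          lazymatch eval cbv beta in T with @eq (@Hom ?C ?a ?b) ?L ?R =>
            let H' := fresh in let y := fresh in let Y := fresh in
            assert (H' : forall y (Y : @Hom C b y), Y ∘ L = Y ∘ R)
              by (intros y Y; exact (f_equal (fun g => Y ∘ g) H));
            repeat setoid_rewrite cmp_assoc in H';
            rewrite H'; clear H'
          end ].
Ltac rw H := let H0 := fresh in pose proof H as H0; norm_in H0; rw_assoc H0; clear H0.
Ltac rwl H := rw (eq_sym H).
Ltac unfold_trans :=
  unfold teq, vcomp, lwhisk, rwhisk, hcomp, idT, natural in *;
  cbn [Fcomp Fid fobj fmap] in *.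

Definition mono {C : Category} {a b : C} (m : Hom a b) : Prop :=
  forall z (p q : Hom z a), m ∘ p = m ∘ q -> p = q.

Lemma equalizer_mono {C : Category} {a b e : C} (f g : Hom a b) (m : Hom e a) :
  is_equalizer f g m -> mono m.
Proof.
  intros [Hfg Hu] z p q Hpq.
  assert (E : f ∘ (m ∘ p) = g ∘ (m ∘ p)) by (rewrite !cmp_assoc, Hfg; reflexivity).
  destruct (Hu z (m ∘ p) E) as [u [_ Huu]].
  rewrite (Huu p eq_refl), (Huu q (eq_sym Hpq)); reflexivity.
Qed.

Lemma mono_cmp {C : Category} {a b c : C} (f : Hom b c) (g : Hom a b) :
  mono f -> mono g -> mono (f ∘ g).
Proof. intros Hf Hg z p q H. apply Hg, Hf. rewrite !cmp_assoc. exact H. Qed.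

Lemma equalizer_factor {C : Category} {a b e z : C} (f g : Hom a b) (m : Hom e a)
  (h : Hom z a) :
  is_equalizer f g m -> f ∘ h = g ∘ h -> { u : Hom z e | m ∘ u = h }.
Proof.
  intros [_ Hu] Hh. apply constructive_indefinite_description.
  destruct (Hu z h Hh) as [u [Hmu _]]. exists u; exact Hmu.
Qed.

Lemma preserves_equalizers_comp {C D E : Category} (G : Functor D E) (F : Functor C D) :
  preserves_equalizers G -> preserves_equalizers F -> preserves_equalizers (Fcomp G F).
Proof. intros HG HF a b e f g m He. exact (HG _ _ _ _ _ _ (HF _ _ _ _ _ _ He)). Qed.

Section Adjunction.
Context {C D : Category} {N : Functor C D} {R : Functor D C} (adj : Adjunction N R).

Lemma unitN a b (f : Hom a b) : fmap R (fmap N f) ∘ unit adj a = unit adj b ∘ f.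
Proof. exact (unit_nat _ _ adj a b f). Qed.
Lemma counitN x y (f : Hom x y) : f ∘ counit adj x = counit adj y ∘ fmap N (fmap R f).
Proof. exact (counit_nat _ _ adj x y f). Qed.
Lemma tri1 a : counit adj (N a) ∘ fmap N (unit adj a) = idm (N a).
Proof. exact (adj_tri1 _ _ adj a). Qed.
Lemma tri2 x : fmap R (counit adj x) ∘ unit adj (R x) = idm (R x).
Proof. exact (adj_tri2 _ _ adj x). Qed.

Lemma right_adjoint_preserves_equalizers : preserves_equalizers R.
Proof.
  intros a b e f g m [Hfg Hu]. split.
  - rewrite <- !fmap_cmp, Hfg; reflexivity.
  - intros z h Hh.
    (* transpose [h] to [N z -> a], factor it, and transpose back *)
    set (h' := counit adj a ∘ fmap N h).
    assert (E : f ∘ h' = g ∘ h').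
    { unfold h'. rewrite !cmp_assoc, !counitN, <- !cmp_assoc, <- !fmap_cmp, Hh.
      reflexivity. }
    destruct (Hu _ h' E) as [u [Hmu Huu]].
    exists (fmap R u ∘ unit adj z). split.
    + rewrite cmp_assoc, <- fmap_cmp, Hmu. unfold h'.
      rewrite fmap_cmp, <- cmp_assoc, unitN, cmp_assoc, tri2, cmp_idl. reflexivity.
    + intros u' Hu'.
      assert (E2 : counit adj e ∘ fmap N u' = u).
      { apply Huu. rewrite cmp_assoc, counitN, <- cmp_assoc, <- fmap_cmp, Hu'.
        reflexivity. }
      rewrite <- E2, fmap_cmp, <- cmp_assoc, unitN, cmp_assoc, tri2, cmp_idl.
      reflexivity.
Qed.

End Adjunction.

Section NatEqualizerPointwise.
Context {C D : Category} (HD : has_equalizers D) (E X Y : Functor C D)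
  (s1 s2 : Trans X Y) (m : Trans E X).
Hypothesis Hs1 : natural X Y s1.
Hypothesis Hs2 : natural X Y s2.

(* Chosen pointwise equalizers of s1, s2 assemble into a functor [eq_functor], to which
   the universal property of the natural equalizer [m] applies. *)
Definition chosen_equalizer (c : C) :
  {e : D & {me : Hom e (X c) | is_equalizer (s1 c) (s2 c) me}}.
Proof.
  destruct (constructive_indefinite_description _ (HD _ _ (s1 c) (s2 c))) as [e He].
  destruct (constructive_indefinite_description _ He) as [me Hme].
  exact (existT _ e (exist _ me Hme)).
Defined.
Definition eq_obj c : D := projT1 (chosen_equalizer c).
Definition eq_arrow c : Hom (eq_obj c) (X c) := proj1_sig (projT2 (chosen_equalizer c)).
Lemma eq_arrow_equalizer c : is_equalizer (s1 c) (s2 c) (eq_arrow c).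
Proof. exact (proj2_sig (projT2 (chosen_equalizer c))). Qed.

Lemma fmap_eq_arrow_equalized a b (f : Hom a b) :
  s1 b ∘ (fmap X f ∘ eq_arrow a) = s2 b ∘ (fmap X f ∘ eq_arrow a).
Proof.
  rewrite !cmp_assoc, <- (Hs1 a b f), <- (Hs2 a b f), <- !cmp_assoc.
  destruct (eq_arrow_equalizer a) as [H _]. rewrite H. reflexivity.
Qed.
Definition eq_fmap a b (f : Hom a b) : Hom (eq_obj a) (eq_obj b) :=
  proj1_sig (equalizer_factor _ _ _ _ (eq_arrow_equalizer b) (fmap_eq_arrow_equalized a b f)).
Lemma eq_fmap_spec a b (f : Hom a b) : eq_arrow b ∘ eq_fmap a b f = fmap X f ∘ eq_arrow a.
Proof. exact (proj2_sig (equalizer_factor _ _ _ _ (eq_arrow_equalizer b) (fmap_eq_arrow_equalized a b f))). Qed.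

Definition eq_functor : Functor C D.
Proof.
  refine {| fobj := eq_obj; fmap := eq_fmap |}.
  - intros a. apply (equalizer_mono _ _ _ (eq_arrow_equalizer a)).
    rewrite eq_fmap_spec, fmap_id, cmp_idl, cmp_idr. reflexivity.
  - intros a b c g f. apply (equalizer_mono _ _ _ (eq_arrow_equalizer c)).
    rewrite eq_fmap_spec, cmp_assoc, eq_fmap_spec, <- cmp_assoc, eq_fmap_spec, cmp_assoc, fmap_cmp.
    reflexivity.
Defined.

Lemma nat_equalizer_pointwise :
  is_nat_equalizer E X Y s1 s2 m -> forall c, is_equalizer (s1 c) (s2 c) (m c).
Proof.
  intros [Hmn [Hmeq Hmu]] c.
  destruct (Hmu eq_functor eq_arrow) as [u [Hun [Hmu_o _]]].
  { intros a b f. cbn. symmetry. apply eq_fmap_spec. }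
  { intros a. apply (eq_arrow_equalizer a). }
  unfold teq, vcomp in Hmu_o.
  assert (Hv : forall a, { v : Hom (E a) (eq_obj a) | eq_arrow a ∘ v = m a }).
  { intros a. apply (equalizer_factor _ _ _ _ (eq_arrow_equalizer a)). apply Hmeq. }
  set (v := fun a => proj1_sig (Hv a)).
  assert (Hmo_v : forall a, eq_arrow a ∘ v a = m a) by (intros a; exact (proj2_sig (Hv a))).
  assert (Hvn : natural E eq_functor v).
  { intros a b f. apply (equalizer_mono _ _ _ (eq_arrow_equalizer b)). cbn.
    rewrite cmp_assoc, eq_fmap_spec, <- cmp_assoc, Hmo_v, cmp_assoc, Hmo_v. apply Hmn. }
  assert (Huv : forall a, u a ∘ v a = idm (E a)).
  { (* both [u ∘ v] and [idT E] factor [m] through itself *)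
    destruct (Hmu E m Hmn Hmeq) as [w [_ [_ Hw]]].
    assert (H1 : teq (vcomp u v) w).
    { apply Hw.
      - intros a b f. unfold vcomp.
        rewrite cmp_assoc, Hun, <- cmp_assoc, Hvn, cmp_assoc. reflexivity.
      - intros a. unfold vcomp. rewrite cmp_assoc, Hmu_o. apply Hmo_v. }
    assert (H2 : teq (idT E) w).
    { apply Hw.
      - intros a b f. unfold idT. rewrite cmp_idl, cmp_idr. reflexivity.
      - intros a. unfold vcomp, idT. apply cmp_idr. }
    intros a. exact (eq_trans (H1 a) (eq_sym (H2 a))). }
  assert (Mm : mono (m c)).
  { intros z p q Hpq.
    rewrite <- (cmp_idl _ _ _ p), <- (cmp_idl _ _ _ q), <- (Huv c), <- !cmp_assoc.
    f_equal. apply (equalizer_mono _ _ _ (eq_arrow_equalizer c)).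
    rewrite !cmp_assoc, Hmo_v. exact Hpq. }
  split; [apply Hmeq|].
  intros z h Hh. destruct (eq_arrow_equalizer c) as [_ Hc].
  destruct (Hc z h Hh) as [w [Hw _]].
  exists (u c ∘ w). split.
  - rewrite cmp_assoc, Hmu_o. exact Hw.
  - intros u' Hu'. apply Mm. rewrite Hu', cmp_assoc, Hmu_o. symmetry. exact Hw.
Qed.

End NatEqualizerPointwise.

Lemma unit_equalizer {C D : Category} {N : Functor C D} {R : Functor D C}
  (adj : Adjunction N R) :
  has_equalizers C -> regular_nat_mono (Fid C) (Fcomp R N) (unit adj) ->
  forall c, is_equalizer (unit adj (R (N c))) (fmap R (fmap N (unit adj c))) (unit adj c).
Proof.
  intros HC [Y [s1 [s2 [H1 [H2 He]]]]].
  pose proof (nat_equalizer_pointwise HC (Fid C) (Fcomp R N) Y s1 s2 (unit adj) H1 H2 He)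
    as Hp.
  intros c. cbn [Fcomp Fid fobj fmap] in *. split.
  - symmetry. apply (unitN adj).
  - intros z h Hh. destruct (Hp c) as [Hs Hu]. apply Hu.
    (* move [s1 c ∘ h], [s2 c ∘ h] across the mono [eta (Y c)] by naturality *)
    apply (equalizer_mono _ _ _ (Hp (Y c))).
    rewrite !cmp_assoc, <- !(unitN adj), <- !cmp_assoc, Hh, !cmp_assoc.
    rewrite <- !fmap_cmp, Hs. reflexivity.
Qed.

Section PreTorsor.
Context {A B T : Category} (NA : Functor A T) (RA : Functor T A)
  (NB : Functor B T) (RB : Functor T B)
  (adjA : Adjunction NA RA) (adjB : Adjunction NB RB) (tau : tauType NA RA NB RB).
Hypothesis HB : has_equalizers B.
Hypothesis Htau : is_pretorsor NA RA NB RB adjA adjB tau.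
Hypothesis HregB : regular_nat_mono (Fid B) (Fcomp RB NB) (unit adjB).
Hypothesis HNA : preserves_equalizers NA.
Hypothesis HNB : preserves_equalizers NB.
Context (D : Functor B B) (j : Trans D (fun b => RB (NA (RA (NB b))))).
Hypothesis Hj : is_nat_equalizer D (RNRN NA RA NB RB) (RNRNRN NA RA NB RB)
  (theta_l NA RA NB RB adjA tau) (theta_r NA RA NB RB adjB) j.

Local Notation hA := (unit adjA).
Local Notation eA := (counit adjA).
Local Notation hB := (unit adjB).
Local Notation eB := (counit adjB).

Lemma tau_natural a b (f : Hom a b) :
  fmap RA (fmap NB (fmap RB (fmap NA (fmap RA (fmap NB f))))) ∘ tau a
  = tau b ∘ fmap RA (fmap NB f).
Proof. exact (proj1 Htau a b f). Qed.

Lemma tau_counitA b : fmap RA (fmap NB (fmap RB (eA (NB b)))) ∘ tau b = fmap RA (fmap NB (hB b)).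
Proof. exact (proj1 (proj2 Htau) b). Qed.

Lemma tau_counitB b : fmap RA (eB (NA (RA (NB b)))) ∘ tau b = hA (RA (NB b)).
Proof. exact (proj1 (proj2 (proj2 Htau)) b). Qed.

Lemma tau_coassoc b :
  fmap RA (fmap NB (fmap RB (fmap NA (tau b)))) ∘ tau b = tau (RB (NA (RA (NB b)))) ∘ tau b.
Proof. exact (proj2 (proj2 (proj2 Htau)) b). Qed.

Definition theta b := fmap RB (eA (NB (RB (NA (RA (NB b)))))) ∘ fmap RB (fmap NA (tau b)).

Lemma theta_natural a b (f : Hom a b) :
  fmap RB (fmap NB (fmap RB (fmap NA (fmap RA (fmap NB f))))) ∘ theta a
  = theta b ∘ fmap RB (fmap NA (fmap RA (fmap NB f))).
Proof.
  unfold theta. norm.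
  rw (f_equal (fmap RB) (counitN adjA _ _ (fmap NB (fmap RB (fmap NA (fmap RA (fmap NB f))))))).
  rw (f_equal (fmap RB) (f_equal (fmap NA) (tau_natural a b f))). reflexivity.
Qed.

Lemma j_natural a b (f : Hom a b) :
  fmap RB (fmap NA (fmap RA (fmap NB f))) ∘ j a = j b ∘ fmap D f.
Proof. exact (proj1 Hj a b f). Qed.

Lemma j_equalizer b : is_equalizer (theta b) (hB (RB (NA (RA (NB b))))) (j b).
Proof.
  refine (nat_equalizer_pointwise HB D (RNRN NA RA NB RB) (RNRNRN NA RA NB RB) _ _ j _ _ Hj b).
  - intros a c f. exact (theta_natural a c f).
  - intros a c f. exact (unitN adjB _ _ _).
Qed.

Lemma j_equalizes b :
  fmap RB (eA (NB (RB (NA (RA (NB b)))))) ∘ fmap RB (fmap NA (tau b)) ∘ j b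
  = hB (RB (NA (RA (NB b)))) ∘ j b.
Proof. exact (proj1 (j_equalizer b)). Qed.

Lemma preserves_equalizers_RBNB : preserves_equalizers (Fcomp RB NB).
Proof. exact (preserves_equalizers_comp _ _ (right_adjoint_preserves_equalizers adjB) HNB). Qed.

Lemma preserves_equalizers_RNRN : preserves_equalizers (RNRN NA RA NB RB).
Proof.
  apply preserves_equalizers_comp; [exact (right_adjoint_preserves_equalizers adjB)|].
  apply preserves_equalizers_comp; [exact HNA|].
  exact (preserves_equalizers_comp _ _ (right_adjoint_preserves_equalizers adjA) HNB).
Qed.

Lemma preserves_equalizers_RNRNRN : preserves_equalizers (RNRNRN NA RA NB RB).
Proof.
  apply preserves_equalizers_comp; [exact (right_adjoint_preserves_equalizers adjB)|].
  apply preserves_equalizers_comp; [exact HNB|].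
  exact preserves_equalizers_RNRN.
Qed.

Lemma unitB_equalizer b : is_equalizer (hB (RB (NB b))) (fmap RB (fmap NB (hB b))) (hB b).
Proof. exact (unit_equalizer adjB HB HregB b). Qed.

Lemma unitB_mono b : mono (hB b).
Proof. exact (equalizer_mono _ _ _ (unitB_equalizer b)). Qed.

Lemma j_mono b : mono (j b).
Proof. exact (equalizer_mono _ _ _ (j_equalizer b)). Qed.

Lemma RBNB_j_mono b : mono (fmap RB (fmap NB (j b))).
Proof. exact (equalizer_mono _ _ _ (preserves_equalizers_RBNB _ _ _ _ _ _ (j_equalizer b))). Qed.

Lemma RNRN_j_mono b : mono (fmap RB (fmap NA (fmap RA (fmap NB (j b))))).
Proof. exact (equalizer_mono _ _ _ (preserves_equalizers_RNRN _ _ _ _ _ _ (j_equalizer b))). Qed.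

Lemma RNRN_unitB_mono b : mono (fmap RB (fmap NA (fmap RA (fmap NB (hB b))))).
Proof. exact (equalizer_mono _ _ _ (preserves_equalizers_RNRN _ _ _ _ _ _ (unitB_equalizer b))). Qed.

Lemma RNRNRNRN_j_mono b :
  mono (fmap RB (fmap NA (fmap RA (fmap NB (fmap RB (fmap NA (fmap RA (fmap NB (j b))))))))).
Proof.
  exact (equalizer_mono _ _ _ (preserves_equalizers_RNRN _ _ _ _ _ _
           (preserves_equalizers_RNRN _ _ _ _ _ _ (j_equalizer b)))).
Qed.

Lemma RNRN_j_j_mono b : mono (fmap RB (fmap NA (fmap RA (fmap NB (j b)))) ∘ j (D b)).
Proof. exact (mono_cmp _ _ (RNRN_j_mono b) (j_mono (D b))). Qed.

Lemma tau_theta b :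
  fmap RA (fmap NB (fmap RB (eA (NB (RB (NA (RA (NB b))))))))
    ∘ fmap RA (fmap NB (fmap RB (fmap NA (tau b)))) ∘ tau b
  = fmap RA (fmap NB (hB (RB (NA (RA (NB b)))))) ∘ tau b.
Proof. rw (tau_coassoc b). rw (tau_counitA (RB (NA (RA (NB b))))). reflexivity. Qed.

(* Delta^D is built in two factorizations: first through R_B N_A R_A N_B j,
   then through j D. *)
Lemma tau_j_RNRN_equalized b :
  fmap RB (fmap NA (fmap RA (fmap NB (theta b)))) ∘ (fmap RB (fmap NA (tau b)) ∘ j b)
  = fmap RB (fmap NA (fmap RA (fmap NB (hB (RB (NA (RA (NB b))))))))
      ∘ (fmap RB (fmap NA (tau b)) ∘ j b).
Proof. unfold theta. norm. rw (f_equal (fmap RB) (f_equal (fmap NA) (tau_theta b))). reflexivity. Qed.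

Definition Delta_pre_sig b :=
  equalizer_factor _ _ _ _ (preserves_equalizers_RNRN _ _ _ _ _ _ (j_equalizer b))
    (tau_j_RNRN_equalized b).
Definition Delta_pre b := proj1_sig (Delta_pre_sig b).
Lemma Delta_pre_spec b :
  fmap RB (fmap NA (fmap RA (fmap NB (j b)))) ∘ Delta_pre b = fmap RB (fmap NA (tau b)) ∘ j b.
Proof. exact (proj2_sig (Delta_pre_sig b)). Qed.

Lemma theta_tau b :
  theta (RB (NA (RA (NB b)))) ∘ fmap RB (fmap NA (tau b))
  = fmap RB (fmap NB (fmap RB (fmap NA (tau b)))) ∘ theta b.
Proof.
  unfold theta. norm.
  rwl (f_equal (fmap RB) (f_equal (fmap NA) (tau_coassoc b))).
  rwl (f_equal (fmap RB) (counitN adjA _ _ (fmap NB (fmap RB (fmap NA (tau b)))))).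
  reflexivity.
Qed.

Lemma Delta_pre_equalized b :
  theta (D b) ∘ Delta_pre b = hB (RB (NA (RA (NB (D b))))) ∘ Delta_pre b.
Proof.
  apply (equalizer_mono _ _ _ (preserves_equalizers_RNRNRN _ _ _ _ _ _ (j_equalizer b))).
  cbn [RNRNRN Fcomp fobj fmap]. rewrite !cmp_assoc, theta_natural.
  rewrite (unitN adjB _ _ (fmap RB (fmap NA (fmap RA (fmap NB (j b)))))).
  rewrite <- !cmp_assoc, !Delta_pre_spec, cmp_assoc, theta_tau, <- !cmp_assoc.
  destruct (j_equalizer b) as [Hjb _]. rewrite Hjb, !cmp_assoc.
  rewrite (unitN adjB _ _ (fmap RB (fmap NA (tau b)))). reflexivity.
Qed.

Definition Delta_sig b := equalizer_factor _ _ _ _ (j_equalizer (D b)) (Delta_pre_equalized b).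
Definition Delta b : Hom (D b) (D (D b)) := proj1_sig (Delta_sig b).

Lemma Delta_spec b :
  fmap RB (fmap NA (fmap RA (fmap NB (j b)))) ∘ j (D b) ∘ Delta b
  = fmap RB (fmap NA (tau b)) ∘ j b.
Proof. rewrite <- cmp_assoc. unfold Delta. rewrite (proj2_sig (Delta_sig b)). apply Delta_pre_spec. Qed.

Lemma Delta_natural a b (f : Hom a b) : fmap D (fmap D f) ∘ Delta a = Delta b ∘ fmap D f.
Proof.
  apply RNRN_j_j_mono. norm.
  rw (Delta_spec b). rwl (j_natural a b f).
  rw (f_equal (fmap RB) (f_equal (fmap NA) (eq_sym (tau_natural a b f)))).
  rwl (j_natural (D a) (D b) (fmap D f)).
  rwl (f_equal (fmap RB) (f_equal (fmap NA) (f_equal (fmap RA) (f_equal (fmap NB) (j_natural a b f))))).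
  rw (Delta_spec a). reflexivity.
Qed.

Lemma counit_j_equalized b :
  hB (RB (NB b)) ∘ (fmap RB (eA (NB b)) ∘ j b)
  = fmap RB (fmap NB (hB b)) ∘ (fmap RB (eA (NB b)) ∘ j b).
Proof.
  norm.
  rwl (unitN adjB _ _ (fmap RB (eA (NB b)))).
  rwl (j_equalizes b).
  rw (f_equal (fmap RB) (counitN adjA _ _ (fmap NB (fmap RB (eA (NB b)))))).
  rw (f_equal (fmap RB) (f_equal (fmap NA) (tau_counitA b))).
  rw (f_equal (fmap RB) (counitN adjA _ _ (fmap NB (hB b)))).
  reflexivity.
Qed.

Definition eps_sig b := equalizer_factor _ _ _ _ (unitB_equalizer b) (counit_j_equalized b).
Definition eps b : Hom (D b) b := proj1_sig (eps_sig b).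

Lemma eps_spec b : hB b ∘ eps b = fmap RB (eA (NB b)) ∘ j b.
Proof. exact (proj2_sig (eps_sig b)). Qed.

Lemma eps_natural a b (f : Hom a b) : f ∘ eps a = eps b ∘ fmap D f.
Proof.
  apply unitB_mono. norm.
  rwl (unitN adjB _ _ f). rw (eps_spec a). rw (eps_spec b).
  rwl (j_natural a b f).
  rw (f_equal (fmap RB) (counitN adjA _ _ (fmap NB f))). reflexivity.
Qed.

Lemma eps_D_Delta b : eps (D b) ∘ Delta b = idm (D b).
Proof.
  apply unitB_mono, RBNB_j_mono. norm.
  rw (eps_spec (D b)).
  rw (f_equal (fmap RB) (counitN adjA _ _ (fmap NB (j b)))).
  rw (Delta_spec b). rw (j_equalizes b).
  rw (unitN adjB _ _ (j b)). reflexivity.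
Qed.

Lemma D_eps_Delta b : fmap D (eps b) ∘ Delta b = idm (D b).
Proof.
  apply j_mono, RNRN_unitB_mono. norm.
  rwl (j_natural (D b) b (eps b)).
  rw (f_equal (fmap RB) (f_equal (fmap NA) (f_equal (fmap RA) (f_equal (fmap NB) (eps_spec b))))).
  rw (Delta_spec b).
  rw (f_equal (fmap RB) (f_equal (fmap NA) (tau_counitA b))). reflexivity.
Qed.

Lemma Delta_coassoc b : fmap D (Delta b) ∘ Delta b = Delta (D b) ∘ Delta b.
Proof.
  apply j_mono, RNRN_j_mono, RNRNRNRN_j_mono. norm.
  rwl (j_natural _ _ (Delta b)).
  rw (f_equal (fmap RB) (f_equal (fmap NA) (f_equal (fmap RA) (f_equal (fmap NB) (Delta_spec b))))).
  rw (Delta_spec b).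
  rw (Delta_spec (D b)).
  rw (f_equal (fmap RB) (f_equal (fmap NA) (tau_natural _ _ (j b)))).
  rw (Delta_spec b).
  rw (f_equal (fmap RB) (f_equal (fmap NA) (tau_coassoc b))). reflexivity.
Qed.

Lemma D_is_comonad : is_comonad D Delta eps.
Proof.
  unfold is_comonad; unfold_trans.
  repeat split; [exact Delta_natural | exact eps_natural | exact D_eps_Delta
                | exact eps_D_Delta | exact Delta_coassoc].
Qed.

Lemma Delta_eq_Delta : Delta_eq NA RA NB RB tau D j Delta.
Proof. intros b. unfold RNRN; unfold_trans. rewrite cmp_assoc. apply Delta_spec. Qed.

Lemma eps_eq_eps : eps_eq NA RA NB RB adjA adjB D j eps.
Proof. exact eps_spec. Qed.

Lemma Delta_unique (De : Trans D (fun b => D (D b))) :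
  Delta_eq NA RA NB RB tau D j De -> teq De Delta.
Proof.
  intros H b. apply RNRN_j_j_mono. unfold Delta_eq, RNRN in H; unfold_trans.
  rewrite <- cmp_assoc, H, Delta_spec. reflexivity.
Qed.

Lemma eps_unique (ep : Trans D (fun b => b)) :
  eps_eq NA RA NB RB adjA adjB D j ep -> teq ep eps.
Proof.
  intros H b. apply unitB_mono. unfold eps_eq in H; unfold_trans.
  rewrite H. symmetry. apply eps_spec.
Qed.

Lemma D_preserves_equalizers : preserves_equalizers D.
Proof.
  intros a b e f g m He.
  pose proof (preserves_equalizers_RNRN _ _ _ _ _ _ He) as He4.
  pose proof (preserves_equalizers_RNRNRN _ _ _ _ _ _ He) as He6.
  cbn [RNRN RNRNRN Fcomp fobj fmap] in He4, He6.
  assert (Dm_mono : mono (fmap D m)).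
  { intros z p q Hpq. apply (j_mono e), (equalizer_mono _ _ _ He4).
    rewrite !cmp_assoc, !j_natural, <- !cmp_assoc, Hpq. reflexivity. }
  split.
  - rewrite <- !fmap_cmp. destruct He as [Hfg _]. rewrite Hfg. reflexivity.
  - intros z h Hh.
    (* factor [j a ∘ h] through R_B N_A R_A N_B m, then through j e *)
    assert (E1 : fmap RB (fmap NA (fmap RA (fmap NB f))) ∘ (j a ∘ h)
               = fmap RB (fmap NA (fmap RA (fmap NB g))) ∘ (j a ∘ h)).
    { rewrite !cmp_assoc, !j_natural, <- !cmp_assoc, Hh. reflexivity. }
    destruct (equalizer_factor _ _ _ _ He4 E1) as [u Hu].
    assert (E2 : theta e ∘ u = hB (RB (NA (RA (NB e)))) ∘ u).
    { apply (equalizer_mono _ _ _ He6). rewrite !cmp_assoc, theta_natural.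
      rewrite (unitN adjB _ _ (fmap RB (fmap NA (fmap RA (fmap NB m))))).
      rewrite <- !cmp_assoc, Hu, !cmp_assoc, (proj1 (j_equalizer a)). reflexivity. }
    destruct (equalizer_factor _ _ _ _ (j_equalizer e) E2) as [v Hv].
    assert (Hmv : fmap D m ∘ v = h).
    { apply j_mono. rewrite cmp_assoc, <- j_natural, <- cmp_assoc, Hv. exact Hu. }
    exists v. split; [exact Hmv|].
    intros v' Hv'. apply Dm_mono. rewrite Hv', Hmv. reflexivity.
Qed.

Definition zeta x : Hom (D (RB x)) (RB (NA (RA x))) :=
  fmap RB (fmap NA (fmap RA (eB x))) ∘ j (RB x).

Lemma zeta_natural x y (f : Hom x y) :
  fmap RB (fmap NA (fmap RA f)) ∘ zeta x = zeta y ∘ fmap D (fmap RB f).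
Proof.
  unfold zeta. norm.
  rw (f_equal (fmap RB) (f_equal (fmap NA) (f_equal (fmap RA) (counitN adjB _ _ f)))).
  rw (j_natural _ _ (fmap RB f)). reflexivity.
Qed.

Lemma zeta_counit x : fmap RB (eA x) ∘ zeta x = eps (RB x).
Proof.
  unfold zeta. norm.
  rwl (f_equal (fmap RB) (counitN adjA _ _ (eB x))).
  rwl (eps_spec (RB x)).
  rw (tri2 adjB x). apply cmp_idl.
Qed.

Lemma zeta_comult x :
  fmap RB (fmap NA (hA (RA x))) ∘ zeta x = zeta (NA (RA x)) ∘ (fmap D (zeta x) ∘ Delta (RB x)).
Proof.
  symmetry. unfold zeta at 1. norm.
  rwl (j_natural _ _ (zeta x)). unfold zeta. norm.
  rw (Delta_spec (RB x)).
  rwl (f_equal (fmap RB) (f_equal (fmap NA) (f_equal (fmap RA)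
         (counitN adjB _ _ (fmap NA (fmap RA (eB x))))))).
  rw (f_equal (fmap RB) (f_equal (fmap NA) (tau_counitB (RB x)))).
  rw (f_equal (fmap RB) (f_equal (fmap NA) (unitN adjA _ _ (fmap RA (eB x))))).
  reflexivity.
Qed.

Lemma zeta_unitB b : zeta (NB b) ∘ fmap D (hB b) = j b.
Proof.
  unfold zeta. norm. rwl (j_natural _ _ (hB b)).
  rw (f_equal (fmap RB) (f_equal (fmap NA) (f_equal (fmap RA) (tri1 adjB b)))).
  norm. reflexivity.
Qed.

Lemma NB_theta_split b :
  fmap NB (theta b) ∘ (eA (NB (RB (NA (RA (NB b))))) ∘ fmap NA (tau b))
  = fmap NB (hB (RB (NA (RA (NB b))))) ∘ (eA (NB (RB (NA (RA (NB b))))) ∘ fmap NA (tau b)).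
Proof.
  unfold theta. norm.
  rw (counitN adjA _ _ (fmap NB (fmap RB (fmap NA (tau b))))).
  rw (counitN adjA _ _ (fmap NB (fmap RB (eA (NB (RB (NA (RA (NB b))))))))).
  rw (f_equal (fmap NA) (tau_theta b)).
  rw (counitN adjA _ _ (fmap NB (hB (RB (NA (RA (NB b))))))).
  reflexivity.
Qed.

Lemma zeta_bar_iso b :
  is_iso (eB (NA (RA (NB b))) ∘ (fmap NB (zeta (NB b)) ∘ fmap NB (fmap D (hB b)))).
Proof.
  rewrite <- fmap_cmp, zeta_unitB.
  pose proof (HNB _ _ _ _ _ _ (j_equalizer b)) as HjN.
  destruct (equalizer_factor _ _ _ _ HjN (NB_theta_split b)) as [w Hw].
  exists w. split.
  - apply (equalizer_mono _ _ _ HjN). norm. rw Hw.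
    rw (counitN adjB _ _ (eA (NB (RB (NA (RA (NB b))))) ∘ fmap NA (tau b))).
    rw (f_equal (fmap NB) (j_equalizes b)).
    rw (tri1 adjB (RB (NA (RA (NB b))))). norm. reflexivity.
  - rw Hw. rw (counitN adjA _ _ (eB (NA (RA (NB b))))).
    rw (f_equal (fmap NA) (tau_counitB b)). rw (tri1 adjA (RA (NB b))). reflexivity.
Qed.

Lemma zeta_coregular_comonad_arrow :
  coregular_comonad_arrow NA RA NB RB adjA adjB D Delta eps (zeta_can NA RA NB RB adjB D j).
Proof.
  split; [exact D_is_comonad|].
  unfold comonad_arrow, zeta_can, zeta_bar, NR_Delta. unfold_trans.
  repeat split; [exact zeta_natural | exact zeta_counit | exact zeta_comult | exact zeta_bar_iso].
Qed.

End PreTorsor.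

Arguments j_natural {A B T NA RA NB RB adjA adjB tau D j} Hj a b f.

Section PreTorsorMorphism.
Context {A B T T' : Category} (F : Functor T' T)
  (NA : Functor A T) (RA : Functor T A) (NB : Functor B T) (RB : Functor T B)
  (adjA : Adjunction NA RA) (adjB : Adjunction NB RB) (tau : tauType NA RA NB RB)
  (NA' : Functor A T') (NB' : Functor B T')
  (adjA' : Adjunction NA' (Fcomp RA F)) (adjB' : Adjunction NB' (Fcomp RB F))
  (tau' : tauType NA' (Fcomp RA F) NB' (Fcomp RB F)).
Hypothesis HB : has_equalizers B.
Hypothesis Htau : is_pretorsor NA RA NB RB adjA adjB tau.
Hypothesis Htau' : is_pretorsor NA' (Fcomp RA F) NB' (Fcomp RB F) adjA' adjB' tau'.
Hypothesis HregB' : regular_nat_mono (Fid B) (Fcomp (Fcomp RB F) NB') (unit adjB').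
Hypothesis HNA' : preserves_equalizers NA'.
Hypothesis HNB' : preserves_equalizers NB'.
Hypothesis Hmor : pretorsor_morphism F NA RA NB RB adjA adjB NA' NB' adjA' adjB' tau tau'.

Local Notation eA := (counit adjA).
Local Notation hB := (unit adjB).
Local Notation eB := (counit adjB).
Local Notation eA' := (counit adjA').
Local Notation hB' := (unit adjB').
Local Notation eB' := (counit adjB').
Local Notation a := (mor_a F NA RA adjA NA' adjA').
Local Notation b := (mor_b F NB RB adjB NB' adjB').

Lemma mor_a_natural x y (f : Hom x y) : fmap F (fmap NA' f) ∘ a x = a y ∘ fmap NA f.
Proof.
  unfold mor_a, vcomp, rwhisk, lwhisk. norm.
  rw (counitN adjA _ _ (fmap F (fmap NA' f))).
  rw (f_equal (fmap NA) (unitN adjA' x y f)). reflexivity.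
Qed.

Lemma mor_b_natural x y (f : Hom x y) : fmap F (fmap NB' f) ∘ b x = b y ∘ fmap NB f.
Proof.
  unfold mor_b, vcomp, rwhisk, lwhisk. norm.
  rw (counitN adjB _ _ (fmap F (fmap NB' f))).
  rw (f_equal (fmap NB) (unitN adjB' x y f)). reflexivity.
Qed.

Lemma mor_a_counit w : fmap F (eA' w) ∘ a (RA (F w)) = eA (F w).
Proof.
  unfold mor_a, vcomp, rwhisk, lwhisk. norm.
  rw (counitN adjA _ _ (fmap F (eA' w))).
  rw (f_equal (fmap NA) (tri2 adjA' w)). apply cmp_idr.
Qed.

Lemma mor_b_counit w : fmap F (eB' w) ∘ b (RB (F w)) = eB (F w).
Proof.
  unfold mor_b, vcomp, rwhisk, lwhisk. norm.
  rw (counitN adjB _ _ (fmap F (eB' w))).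
  rw (f_equal (fmap NB) (tri2 adjB' w)). apply cmp_idr.
Qed.

Lemma mor_b_unit x : fmap RB (b x) ∘ hB x = hB' x.
Proof.
  unfold mor_b, vcomp, rwhisk, lwhisk. norm.
  rw (unitN adjB _ _ (hB' x)).
  rw (tri2 adjB (F (NB' x))). apply cmp_idl.
Qed.

Definition mor_ab x : Hom (NA (RA (NB x))) (F (NA' (RA (F (NB' x))))) :=
  a (RA (F (NB' x))) ∘ fmap NA (fmap RA (b x)).

Lemma mor_ab_natural x y (f : Hom x y) :
  fmap F (fmap NA' (fmap RA (fmap F (fmap NB' f)))) ∘ mor_ab x
  = mor_ab y ∘ fmap NA (fmap RA (fmap NB f)).
Proof.
  unfold mor_ab. norm. rw (mor_a_natural _ _ (fmap RA (fmap F (fmap NB' f)))).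
  rw (f_equal (fmap NA) (f_equal (fmap RA) (mor_b_natural x y f))). reflexivity.
Qed.

Lemma pretorsor_morphism_tau x :
  fmap RA (b (RB (F (NA' (RA (F (NB' x))))))) ∘ fmap RA (fmap NB (fmap RB (mor_ab x))) ∘ tau x
  = tau' x ∘ fmap RA (b x).
Proof.
  pose proof (Hmor x) as H. unfold pretorsor_morphism, vcomp, lwhisk, hcomp in H.
  unfold mor_ab. norm. norm_in H. exact H.
Qed.

Lemma mor_ab_def x : mor_ab x = a (RA (F (NB' x))) ∘ fmap NA (fmap RA (b x)).
Proof. reflexivity. Qed.

Lemma mor_b_def x : b x = eB (F (NB' x)) ∘ fmap NB (hB' x).
Proof. reflexivity. Qed.

(* Otherwise unification inside [rw] unfolds these and the rewrites stop matching;
   [mor_ab_def] and [mor_b_def] unfold them on demand. *)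
Opaque mor_a mor_b mor_ab.

Lemma mor_ab_theta x :
  fmap F (eA' (NB' (RB (F (NA' (RA (F (NB' x)))))))) ∘ fmap F (fmap NA' (tau' x)) ∘ mor_ab x
  = b (RB (F (NA' (RA (F (NB' x)))))) ∘ fmap NB (fmap RB (mor_ab x))
      ∘ eA (NB (RB (NA (RA (NB x))))) ∘ fmap NA (tau x).
Proof.
  rw (counitN adjA _ _ (fmap NB (fmap RB (mor_ab x)))).
  rw (counitN adjA _ _ (b (RB (F (NA' (RA (F (NB' x)))))))).
  rw (f_equal (fmap NA) (pretorsor_morphism_tau x)).
  rewrite mor_ab_def. norm.
  rw (mor_a_natural _ _ (tau' x)).
  rw (mor_a_counit (NB' (RB (F (NA' (RA (F (NB' x)))))))).
  reflexivity.
Qed.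

Lemma mor_ab_counit x : fmap F (eA' (NB' x)) ∘ mor_ab x = b x ∘ eA (NB x).
Proof.
  rewrite mor_ab_def. norm. rw (mor_a_counit (NB' x)).
  rwl (counitN adjA _ _ (b x)). reflexivity.
Qed.

Lemma mor_ab_tau x :
  fmap F (fmap NA' (tau' x)) ∘ mor_ab x
  = fmap F (fmap NA' (fmap RA (fmap F (fmap NB' (fmap RB (mor_ab x))))))
      ∘ mor_ab (RB (NA (RA (NB x)))) ∘ fmap NA (tau x).
Proof.
  rewrite (mor_ab_def (RB (NA (RA (NB x))))). norm.
  rw (mor_a_natural _ _ (fmap RA (fmap F (fmap NB' (fmap RB (mor_ab x)))))).
  rw (f_equal (fmap NA) (f_equal (fmap RA) (mor_b_natural _ _ (fmap RB (mor_ab x))))).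
  rw (f_equal (fmap NA) (pretorsor_morphism_tau x)).
  rewrite (mor_ab_def x). norm.
  rw (mor_a_natural _ _ (tau' x)). reflexivity.
Qed.

Lemma mor_ab_zeta y :
  fmap F (fmap NA' (fmap RA (fmap F (eB' y)))) ∘ mor_ab (RB (F y))
  = a (RA (F y)) ∘ fmap NA (fmap RA (eB (F y))).
Proof.
  rewrite mor_ab_def. norm.
  rw (mor_a_natural _ _ (fmap RA (fmap F (eB' y)))).
  rw (f_equal (fmap NA) (f_equal (fmap RA) (mor_b_counit y))). reflexivity.
Qed.

Context (D : Functor B B) (j : Trans D (fun x => RB (NA (RA (NB x)))))
  (De : Trans D (fun x => D (D x))) (ep : Trans D (fun x => x))
  (D' : Functor B B) (j' : Trans D' (fun x => RB (F (NA' (RA (F (NB' x)))))))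
  (De' : Trans D' (fun x => D' (D' x))) (ep' : Trans D' (fun x => x)).
Hypothesis Hj : is_nat_equalizer D (RNRN NA RA NB RB) (RNRNRN NA RA NB RB)
  (theta_l NA RA NB RB adjA tau) (theta_r NA RA NB RB adjB) j.
Hypothesis HDe : Delta_eq NA RA NB RB tau D j De.
Hypothesis Hep : eps_eq NA RA NB RB adjA adjB D j ep.
Hypothesis Hj' : is_nat_equalizer D' (RNRN NA' (Fcomp RA F) NB' (Fcomp RB F))
  (RNRNRN NA' (Fcomp RA F) NB' (Fcomp RB F))
  (theta_l NA' (Fcomp RA F) NB' (Fcomp RB F) adjA' tau')
  (theta_r NA' (Fcomp RA F) NB' (Fcomp RB F) adjB') j'.
Hypothesis HDe' : Delta_eq NA' (Fcomp RA F) NB' (Fcomp RB F) tau' D' j' De'.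
Hypothesis Hep' : eps_eq NA' (Fcomp RA F) NB' (Fcomp RB F) adjA' adjB' D' j' ep'.

Lemma j'_equalizer x : is_equalizer
  (fmap RB (fmap F (eA' (NB' (RB (F (NA' (RA (F (NB' x))))))))) ∘ fmap RB (fmap F (fmap NA' (tau' x))))
  (hB' (RB (F (NA' (RA (F (NB' x))))))) (j' x).
Proof. exact (j_equalizer NA' (Fcomp RA F) NB' (Fcomp RB F) adjA' adjB' tau' HB Htau' D' j' Hj' x). Qed.

Lemma j'_mono x : mono (j' x).
Proof. exact (equalizer_mono _ _ _ (j'_equalizer x)). Qed.

Lemma RNRN_j'_j'_mono x :
  mono (fmap RB (fmap F (fmap NA' (fmap RA (fmap F (fmap NB' (j' x)))))) ∘ j' (D' x)).
Proof.
  exact (RNRN_j_j_mono NA' (Fcomp RA F) NB' (Fcomp RB F) adjA' adjB' tau' HB Htau' HNA' HNB'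
           D' j' Hj' x).
Qed.

Lemma unitB'_mono x : mono (hB' x).
Proof. exact (unitB_mono NB' (Fcomp RB F) adjB' HB HregB' x). Qed.

Lemma De_spec x :
  fmap RB (fmap NA (fmap RA (fmap NB (j x)))) ∘ j (D x) ∘ De x = fmap RB (fmap NA (tau x)) ∘ j x.
Proof. pose proof (HDe x) as H. unfold_trans. rewrite <- cmp_assoc. exact H. Qed.

Lemma De'_spec x :
  fmap RB (fmap F (fmap NA' (fmap RA (fmap F (fmap NB' (j' x)))))) ∘ j' (D' x) ∘ De' x
  = fmap RB (fmap F (fmap NA' (tau' x))) ∘ j' x.
Proof. pose proof (HDe' x) as H. unfold_trans. rewrite <- cmp_assoc. exact H. Qed.

Lemma ep_spec x : hB x ∘ ep x = fmap RB (eA (NB x)) ∘ j x.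
Proof. exact (Hep x). Qed.

Lemma ep'_spec x : hB' x ∘ ep' x = fmap RB (fmap F (eA' (NB' x))) ∘ j' x.
Proof. exact (Hep' x). Qed.

Lemma mor_ab_j_equalized x :
  (fmap RB (fmap F (eA' (NB' (RB (F (NA' (RA (F (NB' x))))))))) ∘ fmap RB (fmap F (fmap NA' (tau' x))))
    ∘ (fmap RB (mor_ab x) ∘ j x)
  = hB' (RB (F (NA' (RA (F (NB' x)))))) ∘ (fmap RB (mor_ab x) ∘ j x).
Proof.
  norm. rw (f_equal (fmap RB) (mor_ab_theta x)).
  rw (j_equalizes NA RA NB RB adjA adjB tau HB Htau D j Hj x).
  rw (unitN adjB _ _ (fmap RB (mor_ab x))).
  rw (mor_b_unit (RB (F (NA' (RA (F (NB' x))))))). reflexivity.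
Qed.

Definition comparison_sig x := equalizer_factor _ _ _ _ (j'_equalizer x) (mor_ab_j_equalized x).
Definition comparison x : Hom (D x) (D' x) := proj1_sig (comparison_sig x).

Lemma comparison_spec x : j' x ∘ comparison x = fmap RB (mor_ab x) ∘ j x.
Proof. exact (proj2_sig (comparison_sig x)). Qed.

Lemma comparison_natural x y (f : Hom x y) :
  fmap D' f ∘ comparison x = comparison y ∘ fmap D f.
Proof.
  apply j'_mono. norm.
  rwl (j_natural Hj' x y f). rw (comparison_spec x).
  rw (f_equal (fmap RB) (mor_ab_natural x y f)).
  rw (j_natural Hj x y f). rw (comparison_spec y). reflexivity.
Qed.

Lemma comparison_counit x : ep' x ∘ comparison x = ep x.
Proof.
  apply unitB'_mono. norm.
  rw (ep'_spec x). rw (comparison_spec x).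
  rw (f_equal (fmap RB) (mor_ab_counit x)).
  rwl (mor_b_unit x). rw (ep_spec x). reflexivity.
Qed.

Lemma comparison_comult x :
  De' x ∘ comparison x = comparison (D' x) ∘ fmap D (comparison x) ∘ De x.
Proof.
  apply RNRN_j'_j'_mono. norm.
  rw (De'_spec x). rw (comparison_spec x).
  rw (comparison_spec (D' x)).
  rwl (j_natural Hj _ _ (comparison x)).
  rwl (f_equal (fmap RB) (mor_ab_natural _ _ (comparison x))).
  rw (f_equal (fmap RB) (f_equal (fmap F) (f_equal (fmap NA') (f_equal (fmap RA)
        (f_equal (fmap F) (f_equal (fmap NB') (comparison_spec x))))))).
  rw (f_equal (fmap RB) (mor_ab_natural _ _ (j x))).
  rw (De_spec x).
  rw (f_equal (fmap RB) (mor_ab_tau x)). reflexivity.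
Qed.

Definition compatible (t : Trans D D') : Prop :=
  rarr_compat F NA RA RB adjA NA' adjA' D D'
    (zeta_can NA RA NB RB adjB D j)
    (zeta_can NA' (Fcomp RA F) NB' (Fcomp RB F) adjB' D' j') t.

Lemma comparison_compatible : compatible comparison.
Proof.
  unfold compatible, rarr_compat, zeta_can. unfold_trans. intros y. norm.
  rw (comparison_spec (RB (F y))).
  rw (f_equal (fmap RB) (mor_ab_zeta y)). reflexivity.
Qed.

(* Compatibility at N'_B x, precomposed with D' eta'^B, determines j' ∘ t. *)
Lemma compatible_spec (t : Trans D D') : natural D D' t -> compatible t ->
  forall x, j' x ∘ t x = fmap RB (mor_ab x) ∘ j x.
Proof.
  intros Hn Hc x.
  unfold compatible, rarr_compat, zeta_can in Hc. unfold_trans.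
  assert (Hj'x : fmap RB (fmap F (fmap NA' (fmap RA (fmap F (eB' (NB' x)))))) ∘ j' (RB (F (NB' x)))
                   ∘ fmap D' (hB' x) = j' x).
  { rwl (j_natural Hj' _ _ (hB' x)). norm.
    rw (f_equal (fmap RB) (f_equal (fmap F) (f_equal (fmap NA') (f_equal (fmap RA)
          (f_equal (fmap F) (tri1 adjB' x)))))).
    norm. reflexivity. }
  rewrite <- Hj'x. norm.
  rw (Hn _ _ (hB' x)).
  pose proof (Hc (NB' x)) as H. norm_in H.
  rwl H.
  rwl (j_natural Hj _ _ (hB' x)).
  rewrite mor_ab_def, mor_b_def. norm. reflexivity.
Qed.

Lemma comparison_unique (t : Trans D D') :
  natural D D' t -> compatible t -> teq t comparison.
Proof.
  intros Hn Hc x. apply j'_mono.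
  rewrite (compatible_spec t Hn Hc x). symmetry. apply comparison_spec.
Qed.

Lemma comparison_comonad_morphism : comonad_morphism D D' De ep De' ep' comparison.
Proof.
  unfold comonad_morphism. unfold_trans.
  split; [exact comparison_natural|]. split; [|exact comparison_counit].
  intros x. rewrite comparison_comult, <- cmp_assoc. reflexivity.
Qed.

End PreTorsorMorphism.

Theorem mainTheorem6 :
  (forall (A B T : Category)
     (NA : Functor A T) (RA : Functor T A) (NB : Functor B T) (RB : Functor T B)
     (adjA : Adjunction NA RA) (adjB : Adjunction NB RB)
     (tau : tauType NA RA NB RB),
     has_equalizers A -> has_equalizers B ->
     torsor_hyps NA RA NB RB adjA adjB tau ->
     forall (D : Functor B B) (j : Trans D (fun b => RB (NA (RA (NB b))))),
       is_nat_equalizer D (RNRN NA RA NB RB) (RNRNRN NA RA NB RB)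
         (theta_l NA RA NB RB adjA tau) (theta_r NA RA NB RB adjB) j ->
       exists (De : Trans D (fun b => D (D b))) (ep : Trans D (fun b => b)),
         natural D (Fcomp D D) De /\ natural D (Fid B) ep /\
         Delta_eq NA RA NB RB tau D j De /\
         eps_eq NA RA NB RB adjA adjB D j ep /\
         (forall De' : Trans D (fun b => D (D b)),
            natural D (Fcomp D D) De' -> Delta_eq NA RA NB RB tau D j De' -> teq De' De) /\
         (forall ep' : Trans D (fun b => b),
            natural D (Fid B) ep' -> eps_eq NA RA NB RB adjA adjB D j ep' -> teq ep' ep) /\
         is_comonad D De ep /\ preserves_equalizers D /\
         coregular_comonad_arrow NA RA NB RB adjA adjB D De ep
           (zeta_can NA RA NB RB adjB D j))
  /\
  (forall (A B T T' : Category) (F : Functor T' T)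
     (NA : Functor A T) (RA : Functor T A) (NB : Functor B T) (RB : Functor T B)
     (adjA : Adjunction NA RA) (adjB : Adjunction NB RB)
     (tau : tauType NA RA NB RB)
     (NA' : Functor A T') (NB' : Functor B T')
     (adjA' : Adjunction NA' (Fcomp RA F)) (adjB' : Adjunction NB' (Fcomp RB F))
     (tau' : tauType NA' (Fcomp RA F) NB' (Fcomp RB F)),
     has_equalizers A -> has_equalizers B ->
     torsor_hyps NA RA NB RB adjA adjB tau ->
     torsor_hyps NA' (Fcomp RA F) NB' (Fcomp RB F) adjA' adjB' tau' ->
     pretorsor_morphism F NA RA NB RB adjA adjB NA' NB' adjA' adjB' tau tau' ->
     forall (D : Functor B B) (j : Trans D (fun b => RB (NA (RA (NB b)))))
            (De : Trans D (fun b => D (D b))) (ep : Trans D (fun b => b))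
            (D' : Functor B B) (j' : Trans D' (fun b => RB (F (NA' (RA (F (NB' b)))))))
            (De' : Trans D' (fun b => D' (D' b))) (ep' : Trans D' (fun b => b)),
       is_nat_equalizer D (RNRN NA RA NB RB) (RNRNRN NA RA NB RB)
         (theta_l NA RA NB RB adjA tau) (theta_r NA RA NB RB adjB) j ->
       natural D (Fcomp D D) De -> natural D (Fid B) ep ->
       Delta_eq NA RA NB RB tau D j De -> eps_eq NA RA NB RB adjA adjB D j ep ->
       is_nat_equalizer D' (RNRN NA' (Fcomp RA F) NB' (Fcomp RB F))
         (RNRNRN NA' (Fcomp RA F) NB' (Fcomp RB F))
         (theta_l NA' (Fcomp RA F) NB' (Fcomp RB F) adjA' tau')
         (theta_r NA' (Fcomp RA F) NB' (Fcomp RB F) adjB') j' ->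
       natural D' (Fcomp D' D') De' -> natural D' (Fid B) ep' ->
       Delta_eq NA' (Fcomp RA F) NB' (Fcomp RB F) tau' D' j' De' ->
       eps_eq NA' (Fcomp RA F) NB' (Fcomp RB F) adjA' adjB' D' j' ep' ->
       exists t : Trans D D',
         comonad_morphism D D' De ep De' ep' t /\
         rarr_compat F NA RA RB adjA NA' adjA' D D'
           (zeta_can NA RA NB RB adjB D j)
           (zeta_can NA' (Fcomp RA F) NB' (Fcomp RB F) adjB' D' j') t /\
         (forall t' : Trans D D',
            comonad_morphism D D' De ep De' ep' t' ->
            rarr_compat F NA RA RB adjA NA' adjA' D D'
              (zeta_can NA RA NB RB adjB D j)
              (zeta_can NA' (Fcomp RA F) NB' (Fcomp RB F) adjB' D' j') t' ->
            teq t' t)).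
Proof.
  split.
  - intros A B T NA RA NB RB adjA adjB tau _ HB [Htau [_ [HregB [HNA HNB]]]] D j Hj.
    pose proof (zeta_coregular_comonad_arrow NA RA NB RB adjA adjB tau HB Htau HregB HNA HNB
                  D j Hj) as Harrow.
    destruct (proj1 Harrow) as [HDe_nat [Hep_nat _]].
    do 2 eexists.
    split; [exact HDe_nat|]. split; [exact Hep_nat|].
    split; [apply Delta_eq_Delta|]. split; [apply eps_eq_eps|].
    split; [intros De _; apply Delta_unique|].
    split; [intros ep _; apply eps_unique|].
    split; [exact (proj1 Harrow)|].
    split; [exact (D_preserves_equalizers NA RA NB RB adjA adjB tau HB Htau HNA HNB D j Hj)|].
    exact Harrow.
  - intros A B T T' F NA RA NB RB adjA adjB tau NA' NB' adjA' adjB' tau' _ HB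
      [Htau _] [Htau' [_ [HregB' [HNA' HNB']]]] Hmor
      D j De ep D' j' De' ep' Hj _ _ HDe Hep Hj' _ _ HDe' Hep'.
    exists (comparison F NA RA NB RB adjA adjB tau NA' NB' adjA' adjB' tau' HB Htau Htau' Hmor
              D j D' j' Hj Hj').
    split; [|split].
    + eapply comparison_comonad_morphism; eassumption.
    + apply comparison_compatible.
    + intros t [Ht_nat _] Ht_compat. eapply comparison_unique; eassumption.
Qed.
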